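(* Let $G$ be a diamond-free CIS graph. Then $\alpha(G)\cdot\omega(G)\ge |V(G)|$. Consequently, $G$ has a clique or a stable set of size at least $|V(G)|^{1/2}$.
   Context: $\alpha(G)$ is the maximum size of a stable set and $\omega(G)$ the maximum size of a clique in $G$. A clique is strong if it intersects every inclusion-maximal stable set; a graph is CIS if every inclusion-maximal clique is strong. The diamond is $K_4$ minus one edge; diamond-free means no induced subgraph isomorphic to the diamond. *)

(* A finite simple graph is a symmetric irreflexive
   relation e on a finite type T (the vertex set V(G) = T). *)
From mathcomp Require Import all_boot.
Set Implicit Arguments. Unset Strict Implicit. Unset Printing Implicit Defensive.

Section Graphs.
Variables (T : finType) (e : rel T).

Definition simple_graph : Prop := symmetric e /\ irreflexive e.

Definition stable (S : {set T}) : bool :=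
  [forall x in S, forall y in S, ~~ e x y].

Definition clique (K : {set T}) : bool :=
  [forall x in K, forall y in K, (x != y) ==> e x y].

Definition maximal_stable (S : {set T}) : bool := maxset stable S.
Definition maximal_clique (K : {set T}) : bool := maxset clique K.

Definition alpha : nat := \max_(S : {set T} | stable S) #|S|.
Definition omega : nat := \max_(K : {set T} | clique K) #|K|.

Definition strong_clique (K : {set T}) : bool :=
  [forall S : {set T}, maximal_stable S ==> (K :&: S != set0)].

Definition CIS : Prop := forall K : {set T}, maximal_clique K -> strong_clique K.

Definition diamond_free : Prop :=
  ~ exists a b c d : T,
      [/\ uniq [:: a; b; c; d],
          [&& e a b, e a c, e a d, e b c & e b d] & ~~ e c d].

End Graphs.

From mathcomp Require Import all_boot all_order all_algebra.
From mathcomp Require Import ring lra.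
Set Implicit Arguments. Unset Strict Implicit. Unset Printing Implicit Defensive.
Import Order.TTheory GRing.Theory Num.Theory.

(** Write [cdeg v] for the number of maximal cliques through the vertex v.
  Two structural facts drive the proof: in a CIS graph every maximal clique
  meets every maximal stable set in exactly one vertex, and in a
  diamond-free graph an edge lies in a unique maximal clique.  Hence
  (a) for every maximal stable set R, the sum of cdeg over R is the number
      of maximal cliques;
  (b) cdeg v <= |N(v) ∩ R| whenever v is outside a maximal stable set R;
  (c) deg v <= cdeg v * (omega - 1).
  Weight each vertex o by 1 / cdeg o and fix a maximal stable set O of
  maximum weight.  For v outside O, exchanging N(v) ∩ O for v yields another
  maximal stable set; comparing it with O through (a), (b) and an AM-GM
  estimate shows that N(v) ∩ O has weight at least 1.  Summing over all
  vertices and using (c) gives |V| <= |O| * omega <= alpha * omega; the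
  second claim follows by taking a maximum clique or a maximum stable set.
*)

Lemma sum_indicator (I : finType) (A : {pred I}) (P : pred I) :
  \sum_(x in A) (P x : nat) = #|[set x in A | P x]|.
Proof. by rewrite -sum1dep_card big_mkcondr. Qed.

Lemma card_sum_mem (I : finType) (A : {set I}) : \sum_x (x \in A : nat) = #|A|.
Proof. by rewrite -sum1_card [RHS]big_mkcond. Qed.

Section ExchangeInequality.
Variable R : realFieldType.
Local Open Scope ring_scope.

Lemma ratio_sq_le_inv (c k : R) : 0 < c -> c <= k -> c / k ^+ 2 <= c^-1.
Proof.
move=> c_gt0 c_le_k; have k_gt0 : 0 < k := lt_le_trans c_gt0 c_le_k.
rewrite ler_pdivrMr ?exprn_gt0 // ler_pdivlMl // expr2.
by rewrite ler_pM // ltW.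
Qed.

Lemma amgm_inv (c k : R) : 0 < c -> 0 < k -> 2 / k <= c^-1 + c / k ^+ 2.
Proof.
move=> c_gt0 k_gt0; rewrite -subr_ge0.
have -> : c^-1 + c / k ^+ 2 - 2 / k = (k - c) ^+ 2 / (c * k ^+ 2).
  by field; rewrite !lt0r_neq0.
by rewrite divr_ge0 ?sqr_ge0 // mulr_ge0 ?exprn_ge0 // ltW.
Qed.

Lemma exchange_inverse_bound (I : finType) (B D : {set I}) (c : I -> R) :
  (forall i, 0 < c i) -> (0 < #|B|)%N ->
  (forall i, i \in D -> c i <= #|B|%:R) ->
  \sum_(i in B) c i = \sum_(i in D) c i ->
  \sum_(i in D) (c i)^-1 <= \sum_(i in B) (c i)^-1 ->
  1 <= \sum_(i in B) (c i)^-1.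
Proof.
move=> c_gt0 B_gt0 c_le_k sum_eq inv_le; set k : R := #|B|%:R.
have k_gt0 : 0 < k by rewrite ltr0n.
have ratio_le : \sum_(i in B) c i / k ^+ 2 <= \sum_(i in B) (c i)^-1.
  rewrite -mulr_suml sum_eq mulr_suml; apply: le_trans inv_le.
  by apply: ler_sum => i /c_le_k; apply: ratio_sq_le_inv.
have amgm : 2 <= \sum_(i in B) ((c i)^-1 + c i / k ^+ 2).
  apply: le_trans (ler_sum _ (fun i _ => amgm_inv (c_gt0 i) k_gt0)).
  by rewrite sumr_const -[X in _ <= X]mulr_natr divfK // lt0r_neq0.
by rewrite big_split /= in amgm; lra.
Qed.

End ExchangeInequality.

Section Graphs.
Variables (T : finType) (e : rel T).
Hypotheses (e_sym : symmetric e) (e_irr : irreflexive e).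

Lemma cliqueP (K : {set T}) :
  reflect (forall x y, x \in K -> y \in K -> x != y -> e x y) (clique e K).
Proof.
apply: (iffP forall_inP) => [cK x y xK yK | cK x xK].
  by have /forall_inP/(_ y yK)/implyP := cK x xK.
by apply/forall_inP => y yK; apply/implyP; apply: cK.
Qed.

Lemma stableP (S : {set T}) :
  reflect (forall x y, x \in S -> y \in S -> ~~ e x y) (stable e S).
Proof.
apply: (iffP forall_inP) => [sS x y xS yS | sS x xS].
  by have /forall_inP/(_ y yS) := sS x xS.
by apply/forall_inP => y yS; apply: sS.
Qed.

Lemma clique0 : clique e set0.
Proof. by apply/cliqueP => x y; rewrite inE. Qed.

Lemma stable0 : stable e set0.
Proof. by apply/stableP => x y; rewrite inE. Qed.

Lemma clique1 v : clique e [set v].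
Proof. by apply/cliqueP => x y; rewrite !inE => /eqP-> /eqP->; rewrite eqxx. Qed.

Lemma clique2 u v : e u v -> clique e [set u; v].
Proof.
move=> euv; apply/cliqueP => x y; rewrite !inE.
by case/orP=> /eqP-> /orP[]/eqP->; rewrite ?eqxx // => _; rewrite e_sym.
Qed.

Lemma cliqueU1 x (K : {set T}) :
  clique e K -> (forall y, y \in K -> e x y) -> clique e (x |: K).
Proof.
move=> /cliqueP cK adj; apply/cliqueP => a b; rewrite !inE.
case/orP=> [/eqP->|aK] /orP[/eqP->|bK]; rewrite ?eqxx // => nab.
- exact: adj.
- by rewrite e_sym; apply: adj.
- exact: cK.
Qed.

Lemma stableU1 v (S : {set T}) :
  stable e S -> (forall o, o \in S -> ~~ e v o) -> stable e (v |: S).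
Proof.
move=> /stableP sS nadj; apply/stableP => x y; rewrite !inE.
case/orP=> [/eqP->|xS] /orP[/eqP->|yS]; rewrite ?e_irr //.
- exact: nadj.
- by rewrite e_sym; apply: nadj.
- exact: sS.
Qed.

Lemma maximal_clique_nonneighbour (K : {set T}) x :
  maximal_clique e K -> x \notin K -> exists2 y, y \in K & ~~ e x y.
Proof.
move=> mK xK; suff /exists_inP[y yK nexy] : [exists y in K, ~~ e x y].
  by exists y.
apply: contraNT xK; rewrite negb_exists_in.
move=> /forall_inP adj; have cxK : clique e (x |: K).
  by apply: cliqueU1 (maxsetp mK) _ => y /adj; rewrite negbK.
by rewrite -(maxsetsup mK cxK (subsetUr _ _)) setU11.
Qed.

Lemma maximal_stable_dominating (S : {set T}) v :
  maximal_stable e S -> v \notin S -> exists2 o, o \in S & e v o.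
Proof.
move=> mS vS; suff /exists_inP[o oS evo] : [exists o in S, e v o] by exists o.
apply: contraNT vS; rewrite negb_exists_in.
move=> /forall_inP nadj; have svS := stableU1 (maxsetp mS) nadj.
by rewrite -(maxsetsup mS svS (subsetUr _ _)) setU11.
Qed.

Lemma card_le_alpha (S : {set T}) : stable e S -> #|S| <= alpha e.
Proof. by move=> sS; apply: (leq_bigmax_cond S). Qed.

Lemma card_le_omega (K : {set T}) : clique e K -> #|K| <= omega e.
Proof. by move=> cK; apply: (leq_bigmax_cond K). Qed.

Lemma alpha_attained : exists2 S, stable e S & #|S| = alpha e.
Proof.
rewrite /alpha; have [|S sS ->] := eq_bigmax_cond (fun S : {set T} => #|S|) (_ : 0 < #|stable e|).
  by apply/card_gt0P; exists set0; apply: stable0.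
by exists S.
Qed.

Lemma omega_attained : exists2 K, clique e K & #|K| = omega e.
Proof.
rewrite /omega; have [|K cK ->] := eq_bigmax_cond (fun K : {set T} => #|K|) (_ : 0 < #|clique e|).
  by apply/card_gt0P; exists set0; apply: clique0.
by exists K.
Qed.

Lemma clique_stable_meet_le1 (K S : {set T}) :
  clique e K -> stable e S -> #|K :&: S| <= 1.
Proof.
move=> /cliqueP cK /stableP sS; apply/card_le1_eqP => x y.
rewrite !inE => /andP[xK xS] /andP[yK yS]; apply/eqP; apply: contraT => nxy.
by move: (sS _ _ yS xS); rewrite (cK y x).
Qed.

Definition mcliques (v : T) : {set {set T}} :=
  [set K | maximal_clique e K & v \in K].
Definition cdeg (v : T) : nat := #|mcliques v|.
Definition degree (v : T) : nat := #|[set u | e v u]|.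

Lemma cdeg_gt0 v : 0 < cdeg v.
Proof.
have [K mK /subsetP sK] := maxset_exists (clique1 v).
by apply/card_gt0P; exists K; rewrite inE sK ?set11 ?andbT.
Qed.

(** (c): each neighbour of o shares a maximal clique with o, and each such
    clique contributes at most omega - 1 neighbours. *)
Lemma degree_le_cdeg o : degree o <= cdeg o * (omega e).-1.
Proof.
rewrite /degree -card_sum_mem.
apply: (@leq_trans (\sum_u \sum_(K in mcliques o) (u \in K :\ o : nat))).
  apply: leq_sum => u _; rewrite inE; case eou: (e o u) => //.
  have [K mK /subsetP sK] := maxset_exists (clique2 eou).
  have oK : K \in mcliques o by rewrite inE sK ?andbT // !inE eqxx.
  rewrite (bigD1 K) //= !inE sK ?inE ?eqxx ?orbT // andbT.
  by case: eqP eou => [->|]; rewrite ?e_irr.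
rewrite exchange_big -sum_nat_const; apply: leq_sum => K; rewrite inE.
case/andP=> mK oK; rewrite card_sum_mem.
have := card_le_omega (maxsetp mK); rewrite (cardsD1 o K) oK add1n.
by case: (omega e).
Qed.

Section CIS.
Hypothesis cis : CIS e.

Lemma maximal_clique_stable_meet1 (K S : {set T}) :
  maximal_clique e K -> maximal_stable e S -> #|K :&: S| = 1.
Proof.
move=> mK mS; apply/eqP; rewrite eqn_leq.
rewrite clique_stable_meet_le1 ?(maxsetp mK) ?(maxsetp mS) //= card_gt0.
by have /forallP/(_ S)/implyP := cis mK; apply.
Qed.

(** (a): double counting of the pairs (x, K), x in R, K a maximal clique. *)
Lemma sum_cdeg_maximal_stable (R : {set T}) :
  maximal_stable e R -> \sum_(x in R) cdeg x = #|[set K | maximal_clique e K]|.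
Proof.
move=> mR; have -> : \sum_(x in R) cdeg x =
   \sum_(x in R) \sum_(K in [set K | maximal_clique e K]) (x \in K : nat).
  by apply: eq_bigr => x _; rewrite sum_indicator; apply: eq_card => K; rewrite !inE.
rewrite exchange_big -sum1_card; apply: eq_bigr => K; rewrite inE => mK.
rewrite sum_indicator -(maximal_clique_stable_meet1 mK mR).
by apply: eq_card => x; rewrite !inE andbC.
Qed.

Section DiamondFree.
Hypothesis dfree : diamond_free e.

(** In a diamond-free graph two maximal cliques sharing two vertices
    coincide: otherwise a vertex x of K1 \ K2 and a non-neighbour y of x
    in K2 would form a diamond with the two shared vertices. *)
Lemma maximal_clique_shared_edge (K1 K2 : {set T}) u v :
  maximal_clique e K1 -> maximal_clique e K2 ->
  u \in K1 -> v \in K1 -> u \in K2 -> v \in K2 -> u != v -> K1 \subset K2.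
Proof.
move=> m1 m2 u1 v1 u2 v2 nuv; apply/subsetP => x xK1; apply: contraT => xK2.
have /cliqueP c1 := maxsetp m1; have /cliqueP c2 := maxsetp m2.
have [y yK2 nexy] := maximal_clique_nonneighbour m2 xK2.
have neq_x w : w \in K2 -> x != w by move=> wK2; apply: contraNneq xK2 => ->.
have neq_y w : e w x -> y != w by move=> ewx; apply: contraNneq nexy => ->; rewrite e_sym.
have eux : e u x by apply: c1 => //; rewrite eq_sym neq_x.
have evx : e v x by apply: c1 => //; rewrite eq_sym neq_x.
case: dfree; exists u, v, x, y; split=> //.
- rewrite /= !inE !negb_or nuv !(eq_sym _ x) !neq_x //=.
  by rewrite !(eq_sym _ y) !neq_y.
- by rewrite eux evx (c1 u v) // (c2 u y) ?(c2 v y) // eq_sym neq_y.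
Qed.

(** (b): the unique vertex of R in each maximal clique through v determines
    that clique, and is a neighbour of v. *)
Lemma cdeg_le_neighbours (R : {set T}) v :
  maximal_stable e R -> v \notin R -> cdeg v <= #|[set u in R | e v u]|.
Proof.
move=> mR vR.
pose f (K : {set T}) := odflt v [pick r in K :&: R].
have fP K : K \in mcliques v -> [/\ f K \in K, f K \in R & e v (f K)].
  rewrite inE => /andP[mK vK].
  have := maximal_clique_stable_meet1 mK mR; rewrite /f; case: pickP => [r|].
    rewrite inE => /andP[rK rR] _ /=; split=> //.
    by apply: (cliqueP _ (maxsetp mK)) => //; apply: contraNneq vR => ->.
  by move/eq_card0; rewrite cardsE => ->.
rewrite /cdeg -(card_in_imset (f := f)); last first.
  move=> K1 K2 h1 h2 eqf; have [a1 _ _] := fP _ h1; have [a2 fR2 _] := fP _ h2.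
  move: h1 h2 a1; rewrite !inE eqf => /andP[m1 v1] /andP[m2 v2] a1.
  have nvr : v != f K2 by apply: contraNneq vR => ->.
  apply/eqP; rewrite eqEsubset.
  by rewrite (maximal_clique_shared_edge m1 m2 v1 a1 v2 a2 nvr)
             (maximal_clique_shared_edge m2 m1 v2 a2 v1 a1 nvr).
apply/subset_leq_card/subsetP => r /imsetP[K hK ->].
by have [_ fR evf] := fP _ hK; rewrite inE fR evf.
Qed.

End DiamondFree.
End CIS.

Local Open Scope ring_scope.

Definition weight (S : {set T}) : rat := \sum_(o in S) ((cdeg o)%:R)^-1.

Definition heavy (O : {set T}) : Prop :=
  maximal_stable e O /\ forall R, maximal_stable e R -> weight R <= weight O.

Lemma heavy_exists : exists O, heavy O.
Proof.
have [O0 mO0 _] := maxset_exists stable0.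
by have [O mO O_max] := arg_maxP weight mO0; exists O.
Qed.

(** Exchange step: put v into O in place of its neighbours B and extend to a
    maximal stable set O'.  Then O loses exactly B, and every new vertex of
    O' has all its neighbours in O inside B. *)
Lemma stable_exchange (O : {set T}) v :
  maximal_stable e O ->
  exists O', [/\ maximal_stable e O', O :\: O' = [set o in O | e v o] &
    forall a, a \in O' :\: O -> [set u in O | e a u] \subset [set o in O | e v o]].
Proof.
set B := [set o in O | e v o] => mO.
have /stableP sO := maxsetp mO.
have keep o : o \in O -> o \notin B -> ~~ e v o.
  by move=> oO; apply: contra => evo; rewrite inE oO.
have sv : stable e (v |: (O :\: B)).
  apply: stableU1 => [|o]; last by rewrite inE => /andP[/keep]; apply.
  by apply/stableP => x y /setDP[xO _] /setDP[yO _]; apply: sO.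
have [O' mO' /subsetP sO'] := maxset_exists sv.
have /stableP sO2 := maxsetp mO'.
have kept o : o \in O -> o \notin B -> o \in O'.
  by move=> oO oB; apply: sO'; rewrite in_setU1 in_setD oB oO orbT.
have vO' : v \in O' by apply: sO'; rewrite setU11.
exists O'; split=> //.
  apply/setP => o; rewrite inE; apply/andP/idP => [[oO' oO]|oB].
    by apply: contraNT oO' => /(kept o oO).
  have /setIdP[oO evo] := oB.
  by split=> //; apply: contraL evo => /(sO2 _ _ vO').
move=> a /setDP[aO' _]; apply/subsetP => u /setIdP[uO eau].
by apply: contraLR eau => /(kept u uO) /(sO2 _ _ aO').
Qed.

Section Heavy.
Hypothesis cis : CIS e.
Hypothesis dfree : diamond_free e.

Lemma heavy_neighbourhood (O : {set T}) v : heavy O -> v \notin O ->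
  1 <= weight [set o in O | e v o].
Proof.
case=> mO O_max vO; set B := [set o in O | e v o].
have [O' [mO' lost new_nbrs]] := stable_exchange v mO.
set D := O' :\: O.
have split_O (F : T -> rat) :
    \sum_(o in O) F o = \sum_(o in O :&: O') F o + \sum_(o in B) F o.
  by rewrite (big_setID O') /= lost.
have split_O' (F : T -> rat) :
    \sum_(o in O') F o = \sum_(o in O :&: O') F o + \sum_(o in D) F o.
  by rewrite (big_setID O) /= setIC.
apply: (@exchange_inverse_bound _ _ B D (fun o => (cdeg o)%:R)).
- by move=> o; rewrite ltr0n cdeg_gt0.
- have [o oO evo] := maximal_stable_dominating mO vO.
  by apply/card_gt0P; exists o; rewrite inE oO evo.
- move=> a aD; have /setDP[_ aO] := aD; rewrite ler_nat.
  exact: leq_trans (cdeg_le_neighbours cis dfree mO aO)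
                   (subset_leq_card (new_nbrs a aD)).
- apply: (@addrI _ (\sum_(o in O :&: O') (cdeg o)%:R)).
  by rewrite -split_O -split_O' -!natr_sum !sum_cdeg_maximal_stable.
- by have := O_max _ mO'; rewrite /weight split_O split_O' lerD2l.
Qed.

Lemma degree_weight_le o : 1 + (degree o)%:R / (cdeg o)%:R <= (omega e)%:R :> rat.
Proof.
have omega_gt0 : (0 < omega e)%N.
  by apply: leq_trans (card_le_omega (clique1 o)); rewrite cards1.
rewrite -(prednK omega_gt0) -addn1 natrD addrC lerD2r.
by rewrite ler_pdivrMr ?ltr0n ?cdeg_gt0 // -natrM ler_nat mulnC degree_le_cdeg.
Qed.

(** Summing the key estimate over all vertices: |V| <= |O| * omega. *)
Lemma order_le_heavy_omega (O : {set T}) : heavy O -> (#|T| <= #|O| * omega e)%N.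
Proof.
move=> hO; pose w o : rat := ((cdeg o)%:R)^-1.
have cover v : 1 <= (v \in O)%:R + \sum_(o in O) (e o v)%:R * w o.
  case vO: (v \in O).
    by rewrite lerDl sumr_ge0 // => o _; rewrite mulr_ge0 ?invr_ge0.
  rewrite add0r; apply: le_trans (heavy_neighbourhood hO (negbT vO)) _.
  rewrite /weight big_mkcond [X in _ <= X]big_mkcond; apply: ler_sum => o _.
  by rewrite inE e_sym; case: (o \in O); case: (e o v); rewrite ?mul1r ?mul0r.
have double_count : \sum_v ((v \in O)%:R + \sum_(o in O) (e o v)%:R * w o)
                  = \sum_(o in O) (1 + (degree o)%:R * w o).
  rewrite big_split exchange_big big_split /=; congr (_ + _).
    by rewrite [RHS]big_mkcond; apply: eq_bigr => v _; case: (v \in O).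
  apply: eq_bigr => o _; rewrite -mulr_suml -natr_sum /degree -card_sum_mem.
  by congr (_%:R * _); apply: eq_bigr => v _; rewrite inE e_sym.
rewrite -(ler_nat rat) -cardsT -[#|[set: T]|]card_sum_mem natr_sum.
rewrite natrM mulr_natl -sumr_const.
apply: (@le_trans _ _ (\sum_v ((v \in O)%:R + \sum_(o in O) (e o v)%:R * w o))).
  by apply: ler_sum => v _; rewrite inE; apply: cover.
rewrite double_count; apply: ler_sum => o _; exact: degree_weight_le.
Qed.

End Heavy.
End Graphs.

Theorem theorem2 (T : finType) (e : rel T) :
  simple_graph e -> diamond_free e -> CIS e ->
  #|T| <= alpha e * omega e /\
  exists S : {set T}, (clique e S || stable e S) /\ #|T| <= #|S| ^ 2.
Proof.
case=> e_sym e_irr dfree cis.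
have [O hO] := heavy_exists e.
have size_bound : #|T| <= alpha e * omega e.
  apply: leq_trans (order_le_heavy_omega e_sym e_irr cis dfree hO) _.
  by rewrite leq_mul2r card_le_alpha ?orbT // (maxsetp hO.1).
split=> //.
have [S sS cardS] := alpha_attained e; have [K cK cardK] := omega_attained e.
have [le_oa | lt_ao] := leqP (omega e) (alpha e).
- exists S; rewrite sS orbT; split=> //; apply: leq_trans size_bound _.
  by rewrite cardS expnS expn1 leq_mul2l le_oa orbT.
- exists K; rewrite cK; split=> //; apply: leq_trans size_bound _.
  by rewrite cardK expnS expn1 leq_mul2r ltnW ?orbT.
Qed.
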